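(* Let $X$ be a compact subset of a real normed vector space $(V,\|\cdot\|)$. Fix $\varepsilon>0$ and a continuous $f:X\to\mathbb R$ such that $af(x)\le\varepsilon+a\|x\|$ for all $x\in X$ and $a\in[0,1]$. Define, for $y\in X$, $$\hat f(y)=\inf_{a\in[0,1],\,b\in(0,1],\,x\in X}\frac1b\big(\varepsilon+\|ax-by\|-af(x)\big).$$ Then the following hold. 1. For every $y\in X$, $-\|y\|\le\hat f(y)\le -f(y)+\varepsilon$. 2. $\hat f$ is $1$-Lipschitz on $X$. 3. For all $x,y\in X$ and $a,b\in[0,1]$, $a\hat f(x)-b\hat f(y)\le a\varepsilon+\|by-ax\|$. *)

From Stdlib Require Import Reals Lra List ClassicalEpsilon.
Open Scope R_scope.

Record NormedSpace := {
  vcar :> Type;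
  vzero : vcar;
  vadd : vcar -> vcar -> vcar;
  vopp : vcar -> vcar;
  vscal : R -> vcar -> vcar;
  vnorm : vcar -> R;
  vadd_assoc : forall x y z, vadd x (vadd y z) = vadd (vadd x y) z;
  vadd_comm : forall x y, vadd x y = vadd y x;
  vadd_0 : forall x, vadd x vzero = x;
  vadd_opp : forall x, vadd x (vopp x) = vzero;
  vscal_1 : forall x, vscal 1 x = x;
  vscal_assoc : forall a b x, vscal a (vscal b x) = vscal (a * b) x;
  vscal_distr_v : forall a x y, vscal a (vadd x y) = vadd (vscal a x) (vscal a y);
  vscal_distr_r : forall a b x, vscal (a + b) x = vadd (vscal a x) (vscal b x);
  vnorm_eq0 : forall x, vnorm x = 0 -> x = vzero;
  vnorm_scal : forall a x, vnorm (vscal a x) = Rabs a * vnorm x;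
  vnorm_triangle : forall x y, vnorm (vadd x y) <= vnorm x + vnorm y
}.

Arguments vzero {_}.
Arguments vadd {_}.
Arguments vopp {_}.
Arguments vscal {_}.
Arguments vnorm {_}.

Definition vsub {V : NormedSpace} (x y : V) : V := vadd x (vopp y).

Definition nopen {V : NormedSpace} (U : V -> Prop) : Prop :=
  forall x, U x -> exists r, 0 < r /\ forall z, vnorm (vsub z x) < r -> U z.

Definition ncompact {V : NormedSpace} (X : V -> Prop) : Prop :=
  forall (I : Type) (U : I -> V -> Prop),
    (forall i, nopen (U i)) ->
    (forall x, X x -> exists i, U i x) ->
    exists l : list I, forall x, X x -> exists i, In i l /\ U i x.

Definition ncontinuous_on {V : NormedSpace} (X : V -> Prop) (f : V -> R) : Prop :=
  forall x, X x -> forall e, 0 < e -> exists d, 0 < d /\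
    forall z, X z -> vnorm (vsub z x) < d -> Rabs (f z - f x) < e.

(* Greatest lower bound and infimum (arbitrary value if no glb exists). *)
Definition nis_glb (E : R -> Prop) (m : R) : Prop :=
  (forall r, E r -> m <= r) /\ (forall m', (forall r, E r -> m' <= r) -> m' <= m).

Definition Rinf (E : R -> Prop) : R :=
  epsilon (inhabits 0) (fun m => nis_glb E m).

Definition fhat {V : NormedSpace} (X : V -> Prop) (eps : R) (f : V -> R) (y : V) : R :=
  Rinf (fun r => exists a b x, 0 <= a <= 1 /\ 0 < b <= 1 /\ X x /\
          r = / b * (eps + vnorm (vsub (vscal a x) (vscal b y)) - a * f x)).

(* For fixed y, fhat y is the infimum of the set of values
     fvalue a b x y = (eps + ||a x - b y|| - a f x) / b,
   with a in [0,1], b in (0,1], x in X.  The bound a f x <= eps + a ||x||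
   and the triangle inequality make every such value at least -||y||, and
   the set contains eps - f y (take a = b = 1, x = y); so by completeness
   of R the infimum is an honest greatest lower bound (Lemma [fhat_glb]).
   Every claim then follows by comparing individual values:
   - part 1: the lower bound above and the witness a = b = 1, x = y;
   - part 2: moving y to y' changes each value by at most ||y - y'||;
   - part 3: for a, b > 0, every value at y with parameters (a', b', x')
     is matched by a value at x with rescaled parameters (Lemma
     [fvalue_transfer], built on the identity [fvalue_rescale]); the
     degenerate cases a = 0 and b = 0 use part 1 and the witness a = 0. *)

From Stdlib Require Import Reals Lra ClassicalEpsilon.
Open Scope R_scope.

Section NormedSpaceFacts.

Variable V : NormedSpace.
Implicit Types (x y z : V) (c : R).

Lemma vadd_0l x : vadd vzero x = x.
Proof. rewrite vadd_comm; apply vadd_0. Qed.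

Lemma vscal_0 x : vscal 0 x = vzero.
Proof.
  pose proof (vscal_distr_r V 0 0 x) as Hdouble; rewrite Rplus_0_l in Hdouble.
  transitivity (vadd (vscal 0 x) (vadd (vscal 0 x) (vopp (vscal 0 x)))).
  - rewrite vadd_opp, vadd_0; reflexivity.
  - rewrite vadd_assoc, <- Hdouble, vadd_opp; reflexivity.
Qed.

Lemma vopp_scal x : vopp x = vscal (-1) x.
Proof.
  assert (Hcancel : vadd x (vscal (-1) x) = vzero).
  { rewrite <- (vscal_1 V x) at 1. rewrite <- vscal_distr_r.
    replace (1 + -1) with 0 by ring. apply vscal_0. }
  rewrite <- (vadd_0 V (vopp x)), <- Hcancel, vadd_assoc.
  rewrite (vadd_comm V (vopp x) x), vadd_opp, vadd_0l; reflexivity.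
Qed.

Lemma vnorm_scal_nonneg c x : 0 <= c -> vnorm (vscal c x) = c * vnorm x.
Proof. intros Hc; rewrite vnorm_scal, Rabs_pos_eq by exact Hc; reflexivity. Qed.

Lemma vnorm_opp x : vnorm (vopp x) = vnorm x.
Proof. rewrite vopp_scal, vnorm_scal, Rabs_left by lra; ring. Qed.

Lemma vnorm_0 : vnorm (@vzero V) = 0.
Proof. rewrite <- (vscal_0 vzero), vnorm_scal, Rabs_R0; ring. Qed.

Lemma vnorm_sub_diag x : vnorm (vsub x x) = 0.
Proof. unfold vsub; rewrite vadd_opp; apply vnorm_0. Qed.

Lemma vsub_0r x : vsub x vzero = x.
Proof.
  assert (Hopp0 : vopp (@vzero V) = vzero).
  { rewrite <- (vadd_0l (vopp vzero)). apply vadd_opp. }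
  unfold vsub; rewrite Hopp0; apply vadd_0.
Qed.

Lemma vnorm_sub_0l x : vnorm (vsub vzero x) = vnorm x.
Proof. unfold vsub; rewrite vadd_0l; apply vnorm_opp. Qed.

Lemma vscal_sub c x y : vscal c (vsub x y) = vsub (vscal c x) (vscal c y).
Proof.
  unfold vsub; rewrite vscal_distr_v, !vopp_scal, !vscal_assoc.
  replace (c * -1) with (-1 * c) by ring; reflexivity.
Qed.

Lemma vnorm_sub_sym x y : vnorm (vsub x y) = vnorm (vsub y x).
Proof.
  assert (Hswap : vsub y x = vscal (-1) (vsub x y)).
  { rewrite vscal_sub; unfold vsub; rewrite !vopp_scal, vscal_assoc.
    replace (-1 * -1) with 1 by ring. rewrite vscal_1, vadd_comm; reflexivity. }
  rewrite Hswap, vnorm_scal, Rabs_left by lra; ring.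
Qed.

Lemma vnorm_sub_triangle x y z :
  vnorm (vsub x z) <= vnorm (vsub x y) + vnorm (vsub y z).
Proof.
  assert (Hsplit : vsub x z = vadd (vsub x y) (vsub y z)).
  { unfold vsub; rewrite vadd_assoc; f_equal.
    rewrite <- vadd_assoc, (vadd_comm V (vopp y) y), vadd_opp, vadd_0; reflexivity. }
  rewrite Hsplit; apply vnorm_triangle.
Qed.

End NormedSpaceFacts.

(* A nonempty set of reals that is bounded below has [Rinf] as its
   greatest lower bound (completeness of R applied to the set -E). *)
Lemma Rinf_glb (E : R -> Prop) (m r0 : R) :
  E r0 -> (forall r, E r -> m <= r) -> nis_glb E (Rinf E).
Proof.
  intros Hr0 Hm. unfold Rinf. apply epsilon_spec.
  destruct (completeness (fun x => E (-x))) as [l [Hub Hlub]].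
  - exists (-m). intros x Hx. specialize (Hm _ Hx). lra.
  - exists (-r0). rewrite Ropp_involutive. exact Hr0.
  - exists (-l). split.
    + intros r Er. assert (-r <= l) by (apply Hub; rewrite Ropp_involutive; exact Er). lra.
    + intros m' Hm'. assert (l <= -m') by (apply Hlub; intros x Hx; specialize (Hm' _ Hx); lra).
      lra.
Qed.

Section Fhat.

Variables (V : NormedSpace) (X : V -> Prop) (eps : R) (f : V -> R).
Hypothesis hbound : forall x a, X x -> 0 <= a <= 1 -> a * f x <= eps + a * vnorm x.

Definition fvalue (a b : R) (x y : V) : R :=
  / b * (eps + vnorm (vsub (vscal a x) (vscal b y)) - a * f x).

Definition fvalues (y : V) (r : R) : Prop :=
  exists a b x, 0 <= a <= 1 /\ 0 < b <= 1 /\ X x /\ r = fvalue a b x y.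

(* Every value at y is at least -||y||, by the hypothesis on f and the
   triangle inequality ||a x|| <= ||a x - b y|| + b ||y||. *)
Lemma fvalues_lb y r : fvalues y r -> - vnorm y <= r.
Proof.
  intros [a [b [x [Ha [Hb [Hx ->]]]]]]. unfold fvalue.
  pose proof (hbound x a Hx Ha) as Hfx.
  pose proof (vnorm_sub_triangle V (vscal a x) (vscal b y) vzero) as Htri.
  rewrite !vsub_0r, !vnorm_scal_nonneg in Htri by lra.
  assert (Hnum : - b * vnorm y <= eps + vnorm (vsub (vscal a x) (vscal b y)) - a * f x)
    by lra.
  apply (Rmult_le_compat_l (/ b)) in Hnum; [|left; apply Rinv_0_lt_compat; lra].
  replace (/ b * (- b * vnorm y)) with (- vnorm y) in Hnum by (field; lra).
  exact Hnum.
Qed.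

Lemma fvalues_diag y : X y -> fvalues y (eps - f y).
Proof.
  intros Hy. exists 1, 1, y. repeat split; try lra; try exact Hy.
  unfold fvalue; rewrite vscal_1, vnorm_sub_diag; field.
Qed.

Lemma fvalues_zero y : X y -> fvalues y (eps + vnorm y).
Proof.
  intros Hy. exists 0, 1, y. repeat split; try lra; try exact Hy.
  unfold fvalue; rewrite vscal_0, vscal_1, vnorm_sub_0l; field.
Qed.

Lemma fhat_glb y : X y -> nis_glb (fvalues y) (fhat X eps f y).
Proof. intros Hy. exact (Rinf_glb _ _ _ (fvalues_diag y Hy) (fvalues_lb y)). Qed.

Lemma fhat_le_value y r : X y -> fvalues y r -> fhat X eps f y <= r.
Proof. intros Hy; apply (proj1 (fhat_glb y Hy)). Qed.

Lemma fhat_ge y m : X y -> (forall r, fvalues y r -> m <= r) -> m <= fhat X eps f y.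
Proof. intros Hy; apply (proj2 (fhat_glb y Hy)). Qed.

Lemma fhat_bounds y : X y -> - vnorm y <= fhat X eps f y <= - f y + eps.
Proof.
  intros Hy. split.
  - apply fhat_ge; [exact Hy | apply fvalues_lb].
  - replace (- f y + eps) with (eps - f y) by ring.
    apply fhat_le_value; [exact Hy | apply fvalues_diag, Hy].
Qed.

(* Replacing y by y' in a value costs at most ||y - y'||; hence fhat is
   1-Lipschitz in each direction. *)
Lemma fhat_shift y y' : X y -> X y' ->
  fhat X eps f y' <= fhat X eps f y + vnorm (vsub y y').
Proof.
  intros Hy Hy'.
  cut (fhat X eps f y' - vnorm (vsub y y') <= fhat X eps f y); [lra|].
  apply fhat_ge; [exact Hy|].
  intros r [a [b [x [Ha [Hb [Hx ->]]]]]].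
  assert (Hvalue' : fhat X eps f y' <= fvalue a b x y')
    by (apply fhat_le_value; [exact Hy' | exists a, b, x; auto]).
  pose proof (vnorm_sub_triangle V (vscal a x) (vscal b y) (vscal b y')) as Htri.
  rewrite <- vscal_sub, vnorm_scal_nonneg in Htri by lra.
  assert (Hcompare : fvalue a b x y' <= fvalue a b x y + vnorm (vsub y y')).
  { unfold fvalue.
    replace (vnorm (vsub y y')) with (/ b * (b * vnorm (vsub y y'))) by (field; lra).
    rewrite <- Rmult_plus_distr_l.
    apply Rmult_le_compat_l; [left; apply Rinv_0_lt_compat; lra | lra]. }
  lra.
Qed.

(* Scaling both parameters by 1/s: after clearing the denominator q the
   value is affine in (s, p) with the norm term homogeneous in (p, q). *)
Lemma fvalue_rescale p q s x y : 0 < q -> 0 < s ->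
  q * fvalue (p / s) (q / s) x y = s * eps + vnorm (vsub (vscal p x) (vscal q y)) - p * f x.
Proof.
  intros Hq Hs. unfold fvalue, Rdiv.
  rewrite (Rmult_comm p (/ s)), (Rmult_comm q (/ s)), <- !(vscal_assoc V (/ s)), <- vscal_sub,
    vnorm_scal_nonneg by (left; apply Rinv_0_lt_compat; lra).
  field; lra.
Qed.

(* Core of part 3: for a, b in (0,1], each value at y is matched by a value
   at x, via the parameters (c a' / s, a / s) with c = b / b', s = a + c. *)
Lemma fvalue_transfer x y a b a' b' x' :
  X x -> X x' -> 0 < a <= 1 -> 0 < b <= 1 -> 0 <= a' <= 1 -> 0 < b' <= 1 ->
  a * fhat X eps f x <= a * eps + vnorm (vsub (vscal b y) (vscal a x)) + b * fvalue a' b' x' y.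
Proof.
  intros Hx Hx' Ha Hb Ha' Hb'.
  set (c := b / b'). set (s := a + c).
  assert (Hc : 0 < c) by (unfold c; apply Rdiv_lt_0_compat; lra).
  assert (Hs : 0 < s) by (unfold s; lra).
  assert (Hunit : forall t, 0 <= t <= s -> 0 <= t / s <= 1).
  { intros t Ht. split.
    - unfold Rdiv; apply Rmult_le_pos; [lra | left; apply Rinv_0_lt_compat; lra].
    - apply (Rmult_le_reg_r s); [lra|]. unfold Rdiv.
      rewrite Rmult_assoc, Rinv_l, Rmult_1_r by lra. lra. }
  assert (Hvalue : fhat X eps f x <= fvalue ((c * a') / s) (a / s) x' x).
  { apply fhat_le_value; [exact Hx|]. exists ((c * a') / s), (a / s), x'.
    assert (Hca' : 0 <= c * a' <= c) by (split; nra).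
    split; [apply Hunit; unfold s; lra|].
    split; [split; [apply Rdiv_lt_0_compat; lra | apply Hunit; unfold s; lra]|].
    split; [exact Hx' | reflexivity]. }
  apply (Rmult_le_compat_l a) in Hvalue; [|lra].
  rewrite fvalue_rescale in Hvalue by lra.
  assert (Hby : vscal b y = vscal c (vscal b' y))
    by (rewrite vscal_assoc; f_equal; unfold c; field; lra).
  pose proof (vnorm_sub_triangle V (vscal (c * a') x') (vscal b y) (vscal a x)) as Htri.
  rewrite Hby in Htri at 1.
  rewrite <- (vscal_assoc V c a' x'), <- vscal_sub, vnorm_scal_nonneg in Htri by lra.
  rewrite vscal_assoc in Htri.
  replace (b * fvalue a' b' x' y)
    with (c * (eps + vnorm (vsub (vscal a' x') (vscal b' y)) - a' * f x'))
    by (unfold fvalue, c; field; lra).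
  unfold s in Hvalue; lra.
Qed.

Lemma fhat_combination x y a b : X x -> X y -> 0 <= a <= 1 -> 0 <= b <= 1 ->
  a * fhat X eps f x - b * fhat X eps f y
    <= a * eps + vnorm (vsub (vscal b y) (vscal a x)).
Proof.
  intros Hx Hy Ha Hb.
  destruct (Req_dec a 0) as [Ha0 | Ha0].
  { subst a. rewrite vscal_0, vsub_0r, vnorm_scal_nonneg by lra.
    pose proof (proj1 (fhat_bounds y Hy)). nra. }
  destruct (Req_dec b 0) as [Hb0 | Hb0].
  { subst b. rewrite vscal_0, vnorm_sub_0l, vnorm_scal_nonneg by lra.
    pose proof (fhat_le_value x _ Hx (fvalues_zero x Hx)). nra. }
  set (M := vnorm (vsub (vscal b y) (vscal a x))).
  cut (/ b * (a * fhat X eps f x - a * eps - M) <= fhat X eps f y).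
  { intros Hlow. apply (Rmult_le_compat_l b) in Hlow; [|lra].
    replace (b * (/ b * (a * fhat X eps f x - a * eps - M)))
      with (a * fhat X eps f x - a * eps - M) in Hlow by (field; lra).
    lra. }
  apply fhat_ge; [exact Hy|].
  intros r [a' [b' [x' [Ha' [Hb' [Hx' ->]]]]]].
  pose proof (fvalue_transfer x y a b a' b' x' Hx Hx' ltac:(lra) ltac:(lra) Ha' Hb')
    as Htransfer.
  apply (Rmult_le_reg_l b); [lra|].
  replace (b * (/ b * (a * fhat X eps f x - a * eps - M)))
    with (a * fhat X eps f x - a * eps - M) by (field; lra).
  fold M in Htransfer. lra.
Qed.

End Fhat.

Theorem lemma1 (V : NormedSpace) (X : V -> Prop) (eps : R) (f : V -> R)
  (hX : ncompact X) (heps : 0 < eps) (hf : ncontinuous_on X f)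
  (hbound : forall x a, X x -> 0 <= a <= 1 -> a * f x <= eps + a * vnorm x) :
  (forall y, X y -> - vnorm y <= fhat X eps f y <= - f y + eps) /\
  (forall x y, X x -> X y -> Rabs (fhat X eps f x - fhat X eps f y) <= vnorm (vsub x y)) /\
  (forall x y a b, X x -> X y -> 0 <= a <= 1 -> 0 <= b <= 1 ->
     a * fhat X eps f x - b * fhat X eps f y
       <= a * eps + vnorm (vsub (vscal b y) (vscal a x))).
Proof.
  split; [|split].
  - intros y Hy. exact (fhat_bounds V X eps f hbound y Hy).
  - intros x y Hx Hy. apply Rabs_le.
    pose proof (fhat_shift V X eps f hbound x y Hx Hy) as Hxy.
    pose proof (fhat_shift V X eps f hbound y x Hy Hx) as Hyx.
    rewrite vnorm_sub_sym in Hyx. lra.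
  - intros x y a b Hx Hy Ha Hb. exact (fhat_combination V X eps f hbound x y a b Hx Hy Ha Hb).
Qed.
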